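(* Let $x_1,\dots,x_n\in\mathbb{R}^p$, $\epsilon>0$, $k(x,x')=\exp(-\|x-x'\|^2/(4\epsilon^2))$, $\bar K_{ij}=k(x_i,x_j)$, $\bar A_{ij}=k(x_i,x_j)/(\bar K_{i\cdot}\bar K_{\cdot j})$, $\bar Z_{ij}=\bar A_{ij}/\bar A_{i\cdot}$ for $1\le i,j\le n$, and $\bar\Lambda=\mathrm{diag}(\bar Z_{\cdot1},\dots,\bar Z_{\cdot n})$. Let $\gamma_n=\sup_{1\le i,j\le n}\bar A_{i\cdot}/\bar A_{j\cdot}-1$. Then $\|\bar Z-\bar\Lambda^{-1}\bar Z^\top\|_2\le\sqrt2\,\gamma_n$.
   Context: $B_{i\cdot}=\sum_jB_{ij}$, $B_{\cdot j}=\sum_iB_{ij}$; $\|\cdot\|_2$ is the spectral norm. *)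

From HB Require Import structures.
From mathcomp Require Import all_boot all_order all_algebra.
From mathcomp Require Import all_classical all_reals all_analysis.
Set Implicit Arguments. Unset Strict Implicit. Unset Printing Implicit Defensive.
Import Order.TTheory GRing.Theory Num.Theory.
Local Open Scope ring_scope.
Local Open Scope classical_set_scope.

Definition vnorm2 (R : realType) (n : nat) (v : 'cV[R]_n) : R :=
  Num.sqrt (\sum_(i < n) v i 0 ^+ 2).

Definition specnorm (R : realType) (m n : nat) (A : 'M[R]_(m, n)) : R :=
  sup [set r : R | exists v : 'cV[R]_n, vnorm2 v <= 1 /\ r = vnorm2 (A *m v)].

Definition sqdist (R : realType) (p : nat) (x y : 'rV[R]_p) : R :=
  \sum_(k < p) (x 0 k - y 0 k) ^+ 2.

Definition gkern (R : realType) (p : nat) (eps : R) (x y : 'rV[R]_p) : R :=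
  expR (- sqdist x y / (4 * eps ^+ 2)).

Section Mats.
Variables (R : realType) (n p : nat) (eps : R) (x : 'I_n -> 'rV[R]_p).

Definition Kbar : 'M[R]_n := \matrix_(i, j) gkern eps (x i) (x j).
Definition rsum (M : 'M[R]_n) (i : 'I_n) : R := \sum_(j < n) M i j.
Definition csum (M : 'M[R]_n) (j : 'I_n) : R := \sum_(i < n) M i j.
Definition Abar : 'M[R]_n :=
  \matrix_(i, j) (Kbar i j / (rsum Kbar i * csum Kbar j)).
Definition Zbar : 'M[R]_n := \matrix_(i, j) (Abar i j / rsum Abar i).
Definition Lambdabar : 'M[R]_n := diag_mx (\row_j csum Zbar j).
(* gamma_n = max_{i,j} A_{i.}/A_{j.} - 1 (finite sup = max; ratios are > 0). *)
Definition gamma_n : R :=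
  \big[Num.max/0]_(i < n) \big[Num.max/0]_(j < n) (rsum Abar i / rsum Abar j) - 1.
End Mats.

From HB Require Import structures.
From mathcomp Require Import all_boot all_order all_algebra.
From mathcomp Require Import all_classical all_reals all_analysis.
From mathcomp Require Import ring lra.
Set Implicit Arguments. Unset Strict Implicit. Unset Printing Implicit Defensive.
Import Order.TTheory GRing.Theory Num.Theory.
Local Open Scope ring_scope.

(* The bound holds even with gamma_n in place of sqrt 2 * gamma_n, for any
   entrywise positive symmetric matrix A in place of Abar.  Write a_i for the
   row sums of A and L_i for the column sums of Z = (A_ij / a_i); by symmetry
   L_i = sum_k A_ik / a_k.  With m = min_k a_k, every a_k lies in
   [m, (1 + gamma) m], hence both a_i and a_j L_i lie in
   [m L_i, (1 + gamma) m L_i].  Since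
     (Z - Lambda^-1 Z^T)_ij = A_ij (a_j L_i - a_i) / (a_i a_j L_i),
   this matrix is dominated entrywise by the symmetric matrix
   B_ij = gamma m A_ij / (a_i a_j), whose row sums are at most
   gamma * sum_j A_ij / a_i = gamma.  The Schur test, which bounds the
   spectral norm by the square root of the product of the maximal row and
   column sums of an entrywise majorant, concludes. *)

Lemma sumr_gt0 (R : numDomainType) (I : finType) (i0 : I) (F : I -> R) :
  (forall i, 0 < F i) -> 0 < \sum_i F i.
Proof.
move=> F_gt0; rewrite (bigD1 i0) //=; apply: ltr_wpDr (F_gt0 i0).
by apply: sumr_ge0 => i _; exact: ltW.
Qed.

Lemma amgm_cross_le (R : realDomainType) (d b w v g : R) :
  0 < g -> `|d| <= b -> 2 * g * (d * w * v) <= b * (w ^+ 2 + g ^+ 2 * v ^+ 2).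
Proof.
move=> g_gt0 d_le_b; have b_ge0 : 0 <= b := le_trans (normr_ge0 d) d_le_b.
have dwv_le : d * w * v <= b * (`|w| * `|v|).
  apply: le_trans (ler_norm _) _; rewrite -mulrA !normrM.
  by apply: ler_wpM2r => //; rewrite mulr_ge0.
have amgm : 2 * g * (`|w| * `|v|) <= w ^+ 2 + g ^+ 2 * v ^+ 2.
  have := sqr_ge0 (`|w| - g * `|v|).
  by rewrite -(real_normK (num_real w)) -(real_normK (num_real v)) => ?; nra.
have := ler_wpM2l b_ge0 amgm.
have : 2 * g * (d * w * v) <= 2 * g * (b * (`|w| * `|v|)).
  by apply: ler_wpM2l => //; nra.
nra.
Qed.

Lemma invmx_diag (F : fieldType) n (d : 'rV[F]_n) :
  (forall j, d 0 j != 0) -> invmx (diag_mx d) = diag_mx (\row_j (d 0 j)^-1).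
Proof.
move=> d_neq0.
have dK : diag_mx d *m diag_mx (\row_j (d 0 j)^-1) = 1%:M.
  by rewrite mulmx_diag; apply/matrixP => i j; rewrite !mxE mulfV.
have [d_unit _] := mulmx1_unit dK.
by rewrite -[RHS]mul1mx -(mulVmx d_unit) -mulmxA dK mulmx1.
Qed.

Lemma schur_test (R : realFieldType) m n (D B : 'M[R]_(m, n)) (g : R)
    (v : 'cV[R]_n) :
  0 <= g -> (forall i j, `|D i j| <= B i j) ->
  (forall i, \sum_j B i j <= g) -> (forall j, \sum_i B i j <= g) ->
  \sum_i (D *m v) i 0 ^+ 2 <= g ^+ 2 * \sum_j v j 0 ^+ 2.
Proof.
move=> g_ge0 D_le_B rowB colB.
have B_ge0 i j : 0 <= B i j := le_trans (normr_ge0 _) (D_le_B i j).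
have [g0|g_neq0] := eqVneq g 0.
  have D0 i j : D i j = 0.
    apply/eqP; rewrite -normr_le0 -g0; apply: le_trans (D_le_B i j) _.
    by apply: le_trans (rowB i); rewrite (bigD1 j) //= lerDl sumr_ge0.
  rewrite g0 expr0n mul0r le_eqVlt; apply/orP; left; apply/eqP.
  by apply: big1 => i _; rewrite mxE big1 ?expr0n // => j _; rewrite D0 mul0r.
have g_gt0 : 0 < g by rewrite lt_def g_neq0.
set u := D *m v; set W := \sum_i _; set V := \sum_j _.
have W_cross : W = \sum_i \sum_j D i j * u i 0 * v j 0.
  apply: eq_bigr => i _; rewrite expr2 {1}/u mxE mulr_suml.
  by apply: eq_bigr => j _; rewrite mulrAC.
have amgm : 2 * g * W <= \sum_i \sum_j B i j * u i 0 ^+ 2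
                         + \sum_i \sum_j B i j * (g ^+ 2 * v j 0 ^+ 2).
  rewrite W_cross mulr_sumr -big_split; apply: ler_sum => i _.
  rewrite mulr_sumr -big_split; apply: ler_sum => j _.
  by have := amgm_cross_le (u i 0) (v j 0) g_gt0 (D_le_B i j); rewrite mulrDr.
have rows : \sum_i \sum_j B i j * u i 0 ^+ 2 <= g * W.
  rewrite /W mulr_sumr; apply: ler_sum => i _; rewrite -mulr_suml.
  by rewrite ler_wpM2r ?sqr_ge0 ?rowB.
have cols : \sum_i \sum_j B i j * (g ^+ 2 * v j 0 ^+ 2) <= g ^+ 3 * V.
  rewrite exchange_big /V mulr_sumr; apply: ler_sum => j _.
  rewrite -mulr_suml [g ^+ 3]exprS -[g * _ * _]mulrA.
  have gv_ge0 : 0 <= g ^+ 2 * v j 0 ^+ 2 by rewrite mulr_ge0 ?sqr_ge0.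
  by rewrite ler_wpM2r ?colB.
have : g * W <= g * (g ^+ 2 * V) by rewrite mulrA -exprS; lra.
by rewrite ler_pM2l.
Qed.

Lemma specnorm_le_schur (R : realType) m n (D B : 'M[R]_(m, n)) (g : R) :
  0 <= g -> (forall i j, `|D i j| <= B i j) ->
  (forall i, \sum_j B i j <= g) -> (forall j, \sum_i B i j <= g) ->
  specnorm D <= g.
Proof.
move=> g_ge0 D_le_B rowB colB; apply: ge_sup.
  exists (vnorm2 (D *m 0)), 0; split => //.
  by rewrite /vnorm2 big1 ?sqrtr0 // => i _; rewrite mxE expr0n.
move=> _ [v [v_le1 ->]]; apply: (@le_trans _ _ (g * vnorm2 v)).
  rewrite /vnorm2 -(ger0_norm g_ge0) -sqrtr_sqr -sqrtrM ?sqr_ge0 //.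
  exact/ler_wsqrtr/schur_test.
by rewrite -[leRHS]mulr1 ler_wpM2l.
Qed.

Definition row_normalize (R : realType) n (A : 'M[R]_n) : 'M[R]_n :=
  \matrix_(i, j) (A i j / rsum A i).

Section SymmetricRowNormalize.
Variables (R : realType) (n : nat) (A : 'M[R]_n).
Hypotheses (A_gt0 : forall i j, 0 < A i j) (A_sym : forall i j, A i j = A j i).

Local Notation a := (rsum A).
Local Notation Z := (row_normalize A).
Local Notation L := (csum Z).
Local Notation defect := (Z - invmx (diag_mx (\row_k L k)) *m Z^T).

Lemma rsum_gt0 i : 0 < a i.
Proof. by rewrite /rsum sumr_gt0. Qed.

Lemma csum_row_normalize i : L i = \sum_k A i k / a k.
Proof. by apply: eq_bigr => k _; rewrite mxE A_sym. Qed.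

Lemma csum_row_normalize_gt0 i : 0 < L i.
Proof.
rewrite csum_row_normalize; apply: (sumr_gt0 i) => k.
by rewrite divr_gt0 ?rsum_gt0.
Qed.

Lemma row_normalize_defectE i j :
  defect i j = A i j / a i - (L i)^-1 * (A i j / a j).
Proof.
rewrite invmx_diag => [|k]; last by rewrite mxE gt_eqF ?csum_row_normalize_gt0.
by rewrite mul_diag_mx !mxE A_sym.
Qed.

Lemma rsum_ratio_bound_ge0 (gam : R) : (0 < n)%N ->
  (forall i j, a i / a j <= gam + 1) -> 0 <= gam.
Proof.
move=> n_gt0 /(_ (Ordinal n_gt0) (Ordinal n_gt0)).
by rewrite divff ?gt_eqF ?rsum_gt0 // lerDr.
Qed.

Section MinRowSum.
Variables (gam m : R).
Hypotheses (gam_ge0 : 0 <= gam) (m_le_rsum : forall k, m <= a k)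
  (rsum_le_m : forall k, a k <= (gam + 1) * m).

Lemma rsum_pinched_csum i : m * L i <= a i <= (gam + 1) * m * L i.
Proof.
rewrite csum_row_normalize !mulr_sumr; apply/andP; split; apply: ler_sum => k _.
- rewrite mulrCA -[leRHS]mulr1 ler_wpM2l ?(ltW (A_gt0 i k)) //.
  by rewrite ler_pdivrMr ?rsum_gt0 ?mul1r.
- rewrite mulrCA -[leLHS]mulr1 ler_wpM2l ?(ltW (A_gt0 i k)) //.
  by rewrite ler_pdivlMr ?rsum_gt0 ?mul1r.
Qed.

Lemma row_normalize_defect_le i j :
  `|defect i j| <= gam * m * (A i j / (a i * a j)).
Proof.
have [ai_gt0 aj_gt0] := (rsum_gt0 i, rsum_gt0 j).
have Li_gt0 := csum_row_normalize_gt0 i.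
have -> : defect i j = A i j / (a i * a j) * ((a j * L i - a i) / L i).
  by rewrite row_normalize_defectE; field; rewrite !gt_eqF.
have Aij_gt0 : 0 < A i j / (a i * a j) by rewrite divr_gt0 ?mulr_gt0.
rewrite normrM (gtr0_norm Aij_gt0) mulrC ler_wpM2r ?(ltW Aij_gt0) //.
rewrite normrM normfV (gtr0_norm Li_gt0) ler_pdivrMr //.
have /andP[lo_i hi_i] := rsum_pinched_csum i.
have lo_j : m * L i <= a j * L i by rewrite ler_wpM2r ?m_le_rsum ?ltW.
have hi_j : a j * L i <= (gam + 1) * m * L i.
  by rewrite ler_wpM2r ?rsum_le_m ?ltW.
by rewrite ler_norml; apply/andP; split; nra.
Qed.

Lemma row_normalize_defect_bound_rsum_le i :
  \sum_j gam * m * (A i j / (a i * a j)) <= gam.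
Proof.
have ai_gt0 := rsum_gt0 i.
apply: (@le_trans _ _ (\sum_j gam * (A i j / a i))).
  apply: ler_sum => j _; rewrite -mulrA ler_wpM2l //.
  have -> : m * (A i j / (a i * a j)) = A i j / a i * (m / a j).
    by field; rewrite !gt_eqF ?rsum_gt0.
  rewrite ler_piMr ?divr_ge0 ?(ltW (A_gt0 i j)) ?(ltW ai_gt0) //.
  by rewrite ler_pdivrMr ?rsum_gt0 ?mul1r.
by rewrite -mulr_sumr -mulr_suml divff ?mulr1 // gt_eqF.
Qed.

End MinRowSum.

Lemma specnorm_row_normalize_defect_le (gam : R) : (0 < n)%N ->
  (forall i j, a i / a j <= gam + 1) ->
  specnorm defect <= gam.
Proof.
move=> n_gt0 ratio_le.
have [i0 _ i0_min] := @arg_minP _ R _ (Ordinal n_gt0) xpredT a erefl.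
have m_le_rsum k : a i0 <= a k by exact: i0_min.
have rsum_le_m k : a k <= (gam + 1) * a i0 by rewrite -ler_pdivrMr ?rsum_gt0.
have gam_ge0 := rsum_ratio_bound_ge0 n_gt0 ratio_le.
pose B := \matrix_(i, j) (gam * a i0 * (A i j / (a i * a j))).
have B_sym i j : B i j = B j i by rewrite !mxE A_sym [a i * _]mulrC.
apply: (specnorm_le_schur (B := B)) => // [i j|i|j].
- by rewrite [B i j]mxE; exact: row_normalize_defect_le.
- by under eq_bigr do rewrite mxE; exact: row_normalize_defect_bound_rsum_le.
- under eq_bigr do rewrite B_sym mxE.
  exact: row_normalize_defect_bound_rsum_le.
Qed.

End SymmetricRowNormalize.

Section GaussianAffinity.
Variables (R : realType) (n p : nat) (eps : R) (x : 'I_n -> 'rV[R]_p).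

Lemma sqdistC (y z : 'rV[R]_p) : sqdist y z = sqdist z y.
Proof. by apply: eq_bigr => k _; rewrite -sqrrN opprB. Qed.

Lemma Kbar_gt0 i j : 0 < Kbar eps x i j.
Proof. by rewrite mxE expR_gt0. Qed.

Lemma Kbar_sym i j : Kbar eps x i j = Kbar eps x j i.
Proof. by rewrite !mxE /gkern sqdistC. Qed.

Lemma csum_Kbar k : csum (Kbar eps x) k = rsum (Kbar eps x) k.
Proof. by apply: eq_bigr => l _; rewrite Kbar_sym. Qed.

Lemma Abar_gt0 i j : 0 < Abar eps x i j.
Proof.
by rewrite mxE csum_Kbar divr_gt0 ?mulr_gt0 ?(rsum_gt0 Kbar_gt0) ?Kbar_gt0.
Qed.

Lemma Abar_sym i j : Abar eps x i j = Abar eps x j i.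
Proof.
rewrite [Abar eps x i j]mxE [Abar eps x j i]mxE !csum_Kbar.
by rewrite Kbar_sym [_ * rsum _ i]mulrC.
Qed.

Lemma rsum_Abar_ratio_le i j :
  rsum (Abar eps x) i / rsum (Abar eps x) j <= gamma_n eps x + 1.
Proof.
rewrite subrK; apply: le_trans (le_bigmax _ _ i).
exact: (le_bigmax _ (fun j => rsum (Abar eps x) i / rsum (Abar eps x) j) j).
Qed.

End GaussianAffinity.

Theorem lemma4 (R : realType) (n p : nat) (x : 'I_n -> 'rV[R]_p) (eps : R)
  (hn : (0 < n)%N) (heps : 0 < eps) :
  specnorm (Zbar eps x - invmx (Lambdabar eps x) *m (Zbar eps x)^T)
    <= Num.sqrt 2 * gamma_n eps x.
Proof.
have A_gt0 := @Abar_gt0 _ _ _ eps x; have A_sym := @Abar_sym _ _ _ eps x.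
have ratio_le := @rsum_Abar_ratio_le _ _ _ eps x.
apply: le_trans (specnorm_row_normalize_defect_le A_gt0 A_sym hn ratio_le) _.
have sqrt2_ge1 : 1 <= Num.sqrt (2 : R).
  by rewrite -{1}sqrtr1; apply: ler_wsqrtr; lra.
exact: ler_peMl (rsum_ratio_bound_ge0 A_gt0 hn ratio_le) sqrt2_ge1.
Qed.
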